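(* Let $\mathcal V$ be a subvariety of $\mathsf V(S_7)$. Then $M_2\notin\mathcal V$ if and only if $\mathcal V$ satisfies the identity $x^2y\approx x^2$.
   Context: $S_7$ is the ai-semiring on $\{\infty,a,1\}$ with $x+x=x$, $x+y=\infty$ for $x\neq y$, and commutative multiplication with $\infty$ a zero, $a\cdot a=\infty$, $a\cdot 1=a$, $1\cdot1=1$. $\mathsf V(S_7)$ is the variety it generates. $M_2$ is the two-element ai-semiring $\{1,\infty\}$ with $1+\infty=\infty$, $x+x=x$, $1\cdot1=1$ and $\infty$ a multiplicative zero. *)

Record algebra := Algebra {
  carrier :> Type;
  add : carrier -> carrier -> carrier;
  mul : carrier -> carrier -> carrier
}.

Inductive term : Type :=
| Var : nat -> term
| Add : term -> term -> term
| Mul : term -> term -> term.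

Fixpoint eval (A : algebra) (v : nat -> A) (t : term) : A :=
  match t with
  | Var n => v n
  | Add s u => add A (eval A v s) (eval A v u)
  | Mul s u => mul A (eval A v s) (eval A v u)
  end.

Definition holds (A : algebra) (s t : term) : Prop :=
  forall v : nat -> A, eval A v s = eval A v t.

Definition models (A : algebra) (Sigma : term -> term -> Prop) : Prop :=
  forall s t, Sigma s t -> holds A s t.

Inductive S7 : Set := S7inf | S7a | S7one.

Definition S7_add (x y : S7) : S7 :=
  match x, y with
  | S7inf, S7inf => S7inf
  | S7a, S7a => S7a
  | S7one, S7one => S7one
  | _, _ => S7inf
  end.

Definition S7_mul (x y : S7) : S7 :=
  match x, y with
  | S7inf, _ => S7inf
  | _, S7inf => S7inf
  | S7a, S7a => S7inf
  | S7a, S7one => S7a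
  | S7one, S7a => S7a
  | S7one, S7one => S7one
  end.

Definition S7alg : algebra := Algebra S7 S7_add S7_mul.

Inductive M2 : Set := M2one | M2inf.

Definition M2_add (x y : M2) : M2 :=
  match x, y with
  | M2one, M2one => M2one
  | _, _ => M2inf
  end.

Definition M2_mul (x y : M2) : M2 :=
  match x, y with
  | M2one, M2one => M2one
  | _, _ => M2inf
  end.

Definition M2alg : algebra := Algebra M2 M2_add M2_mul.

(** V(S_7) = HSP(S_7) = Mod(Id(S_7)) (Birkhoff): the algebras satisfying
    every identity true in S_7. *)
Definition in_VS7 (A : algebra) : Prop :=
  forall s t, holds S7alg s t -> holds A s t.

Definition x2 : term := Mul (Var 0) (Var 0).
Definition x2y : term := Mul (Mul (Var 0) (Var 0)) (Var 1).

(* If an identity s ~ t of the variety has a variable z in s but not in t,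
   substituting x^2 y (resp. x^2 y^2) for z and x^2 for every other variable
   yields, modulo identities of S_7, the equalities x^2 y^2 ~ x^2 y and
   x^2 y^2 ~ x^2 (in S_7, x^2 is idempotent and every term containing z then
   evaluates to q or q^2 with q the value substituted for z); hence x^2 y ~ x^2.
   Otherwise every identity of the variety is balanced, and M_2 satisfies all
   balanced identities, while it fails x^2 y ~ x^2 at x = 1, y = oo. *)

From Stdlib Require Import Classical Arith Bool.

Fixpoint occurs (z : nat) (r : term) : bool :=
  match r with
  | Var n => Nat.eqb n z
  | Add a b => occurs z a || occurs z b
  | Mul a b => occurs z a || occurs z b
  end.

Fixpoint subst (sg : nat -> term) (r : term) : term :=
  match r with
  | Var n => sg n
  | Add a b => Add (subst sg a) (subst sg b)
  | Mul a b => Mul (subst sg a) (subst sg b)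
  end.

Definition point_subst (z : nat) (u e : term) (n : nat) : term :=
  if Nat.eqb n z then u else e.

Lemma eval_subst A v sg r :
  eval A v (subst sg r) = eval A (fun n => eval A v (sg n)) r.
Proof. induction r; simpl; congruence. Qed.

Lemma holds_subst A sg s t : holds A s t -> holds A (subst sg s) (subst sg t).
Proof. intros H v. rewrite !eval_subst. apply H. Qed.

Lemma holds_sym A s t : holds A s t -> holds A t s.
Proof. intros H v. symmetry. apply H. Qed.

Section EvalMarked.

Variables (A : algebra) (e : A) (P : A -> Prop).

Hypotheses (add_idem : add A e e = e) (mul_idem : mul A e e = e).
Hypotheses (P_add : forall a b, P a -> P b -> P (add A a b))
           (P_mul : forall a b, P a -> P b -> P (mul A a b)).
Hypotheses (P_add_e : forall a, P a -> P (add A a e) /\ P (add A e a))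
           (P_mul_e : forall a, P a -> P (mul A a e) /\ P (mul A e a)).

Lemma eval_marked v z r :
  P (v z) -> (forall n, n <> z -> v n = e) ->
  if occurs z r then P (eval A v r) else eval A v r = e.
Proof.
  intros Pz He.
  induction r as [n | a IHa b IHb | a IHa b IHb]; simpl.
  - destruct (Nat.eqb_spec n z) as [-> | Hn]; [exact Pz | exact (He n Hn)].
  - destruct (occurs z a), (occurs z b); simpl.
    + exact (P_add _ _ IHa IHb).
    + rewrite IHb. exact (proj1 (P_add_e _ IHa)).
    + rewrite IHa. exact (proj2 (P_add_e _ IHb)).
    + rewrite IHa, IHb. exact add_idem.
  - destruct (occurs z a), (occurs z b); simpl.
    + exact (P_mul _ _ IHa IHb).
    + rewrite IHb. exact (proj1 (P_mul_e _ IHa)).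
    + rewrite IHa. exact (proj2 (P_mul_e _ IHb)).
    + rewrite IHa, IHb. exact mul_idem.
Qed.

End EvalMarked.

Section S7Facts.

Variables x w : S7.

Let e := S7_mul x x.
Let q := S7_mul e w.
Let Q (a : S7) : Prop := a = q \/ a = S7_mul q q.

Lemma S7_square_add_idem : S7_add e e = e.
Proof. unfold e; destruct x; reflexivity. Qed.

Lemma S7_square_mul_idem : S7_mul e e = e.
Proof. unfold e; destruct x; reflexivity. Qed.

Lemma S7_Q_add a b : Q a -> Q b -> Q (S7_add a b).
Proof.
  unfold Q, q, e; intros [-> | ->] [-> | ->]; destruct x, w; simpl; auto.
Qed.

Lemma S7_Q_mul a b : Q a -> Q b -> Q (S7_mul a b).
Proof.
  unfold Q, q, e; intros [-> | ->] [-> | ->]; destruct x, w; simpl; auto.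
Qed.

Lemma S7_Q_add_square a : Q a -> Q (S7_add a e) /\ Q (S7_add e a).
Proof. unfold Q, q, e; intros [-> | ->]; destruct x, w; simpl; auto. Qed.

Lemma S7_Q_mul_square a : Q a -> Q (S7_mul a e) /\ Q (S7_mul e a).
Proof. unfold Q, q, e; intros [-> | ->]; destruct x, w; simpl; auto. Qed.

Lemma S7_eval_marked v z r :
  v z = q -> (forall n, n <> z -> v n = e) ->
  if occurs z r then eval S7alg v r = q \/ eval S7alg v r = S7_mul q q
  else eval S7alg v r = e.
Proof.
  intros Hz He.
  apply (eval_marked S7alg e Q S7_square_add_idem S7_square_mul_idem
           S7_Q_add S7_Q_mul S7_Q_add_square S7_Q_mul_square); [| exact He].
  left; exact Hz.
Qed.

End S7Facts.

Lemma S7_eval_point_subst z (W : term) u r :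
  let x := u 0 in let q := S7_mul (S7_mul x x) (eval S7alg u W) in
  if occurs z r
  then eval S7alg u (subst (point_subst z (Mul x2 W) x2) r) = q \/
       eval S7alg u (subst (point_subst z (Mul x2 W) x2) r) = S7_mul q q
  else eval S7alg u (subst (point_subst z (Mul x2 W) x2) r) = S7_mul x x.
Proof.
  rewrite eval_subst.
  apply S7_eval_marked; unfold point_subst.
  - rewrite Nat.eqb_refl; reflexivity.
  - intros n Hn. apply Nat.eqb_neq in Hn. rewrite Hn. reflexivity.
Qed.

Lemma x2y_of_var_in_left_only A s t z :
  in_VS7 A -> holds A s t -> occurs z s = true -> occurs z t = false ->
  holds A x2y x2.
Proof.
  intros HA Hst Hs Ht.
  set (y2 := Mul (Var 1) (Var 1)).
  set (sg W := point_subst z (Mul x2 W) x2).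
  assert (Ht_S7 : forall W, holds S7alg (subst (sg W) t) x2).
  { intros W u. pose proof (S7_eval_point_subst z W u t) as E.
    rewrite Ht in E. exact E. }
  assert (Hs_y : holds S7alg (Mul (subst (sg (Var 1)) s) (Var 1)) (Mul x2 y2)).
  { intros u. pose proof (S7_eval_point_subst z (Var 1) u s) as E.
    rewrite Hs in E. cbv zeta in E. unfold sg; cbn [eval].
    destruct E as [-> | ->]; simpl; destruct (u 0), (u 1); reflexivity. }
  assert (Hs_y2 : holds S7alg (subst (sg y2) s) (Mul x2 y2)).
  { intros u. pose proof (S7_eval_point_subst z y2 u s) as E.
    rewrite Hs in E. cbv zeta in E. unfold sg; cbn [eval].
    destruct E as [-> | ->]; simpl; destruct (u 0), (u 1); reflexivity. }
  intros v.
  transitivity (eval A v (Mul x2 y2)).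
  - rewrite <- (HA _ _ Hs_y v).
    change x2y with (Mul x2 (Var 1)); cbn [eval].
    rewrite (holds_subst A _ s t Hst v), (HA _ _ (Ht_S7 (Var 1)) v).
    reflexivity.
  - rewrite <- (HA _ _ Hs_y2 v), (holds_subst A _ s t Hst v).
    exact (HA _ _ (Ht_S7 y2) v).
Qed.

Lemma x2y_of_unbalanced A s t z :
  in_VS7 A -> holds A s t -> occurs z s <> occurs z t -> holds A x2y x2.
Proof.
  intros HA Hst Hz.
  destruct (occurs z s) eqn:Es, (occurs z t) eqn:Et; try congruence.
  - exact (x2y_of_var_in_left_only A s t z HA Hst Es Et).
  - exact (x2y_of_var_in_left_only A t s z HA (holds_sym A s t Hst) Et Es).
Qed.

Lemma M2_add_eq_one (a b : M2) :
  M2_add a b = M2one <-> a = M2one /\ b = M2one.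
Proof. destruct a, b; simpl; intuition congruence. Qed.

Lemma M2_eval_one v r :
  eval M2alg v r = M2one <-> (forall n, occurs n r = true -> v n = M2one).
Proof.
  induction r as [m | a IHa b IHb | a IHa b IHb]; simpl.
  - split.
    + intros H n Hn. apply Nat.eqb_eq in Hn. subst m. exact H.
    + intros H. apply H, Nat.eqb_refl.
  - rewrite M2_add_eq_one, IHa, IHb.
    setoid_rewrite orb_true_iff. firstorder.
  - (* In M_2 the two operations coincide. *)
    change (M2_mul ?a ?b) with (M2_add a b).
    rewrite M2_add_eq_one, IHa, IHb.
    setoid_rewrite orb_true_iff. firstorder.
Qed.

Lemma M2_holds_of_balanced s t :
  (forall n, occurs n s = occurs n t) -> holds M2alg s t.
Proof.
  intros Hst v.
  assert (H : eval M2alg v s = M2one <-> eval M2alg v t = M2one).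
  { rewrite !M2_eval_one. setoid_rewrite Hst. reflexivity. }
  destruct (eval M2alg v s), (eval M2alg v t); intuition congruence.
Qed.

Lemma M2_fails_x2y : ~ holds M2alg x2y x2.
Proof.
  intros H. discriminate (H (fun n => match n with 0 => M2one | _ => M2inf end)).
Qed.

Theorem proposition3p4 (Sigma : term -> term -> Prop)
  (Hsub : forall A : algebra, models A Sigma -> in_VS7 A) :
  ~ models M2alg Sigma <->
  (forall A : algebra, models A Sigma -> holds A x2y x2).
Proof.
  split.
  - intros HM A HA.
    destruct (classic (holds A x2y x2)) as [H | Hfail]; [exact H |].
    exfalso; apply HM; intros s t Hst.
    apply M2_holds_of_balanced; intros n.
    destruct (bool_dec (occurs n s) (occurs n t)) as [E | E]; [exact E |].
    exfalso; exact (Hfail (x2y_of_unbalanced A s t n (Hsub A HA) (HA s t Hst) E)).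
  - intros H HM. exact (M2_fails_x2y (H M2alg HM)).
Qed.
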